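(* Let $p$ be a prime and let $P_p=\sum_{k=0}^{p-2}a_kp^k$, with digits $a_k\in\{0,1,\dots,p-1\}$ (so $P_p<p^{p-1}$), be a positive period of the Bell numbers modulo $p$, i.e. $B_{n+P_p}\equiv B_n\pmod p$ for all $n\geq 0$ (not necessarily the minimal period). Then \[ \sum_{k=0}^{p-2}a_k\geq p+1. \]
   Context: $B_n$ is the $n$-th Bell number, the number of partitions of an $n$-element set into nonempty blocks. *)

From mathcomp Require Import all_boot.
Set Implicit Arguments. Unset Strict Implicit. Unset Printing Implicit Defensive.

(* B_n : the number of partitions of the n-element set 'I_n into nonempty
   blocks (mathcomp's [partition] requires blocks to be nonempty, pairwise
   disjoint, and covering). *)
Definition bell (n : nat) : nat :=
  #|[set P : {set {set 'I_n}} | partition P [set: 'I_n]]|.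

From mathcomp Require Import all_boot ssralg poly zmodp finfield.
From mathcomp Require Import fingroup perm action pgroup cyclic sylow ring.
Set Implicit Arguments. Unset Strict Implicit. Unset Printing Implicit Defensive.
Import GRing.Theory.

(* Let u_n be B_n mod p and let E be the shift of sequences.  Touchard's
   congruence B_(n+p) = B_n + B_(n+1) says that f = X^p - X - 1 annihilates u,
   i.e. f(E) u = 0; it follows from counting mod p the equivalence relations on
   A + F_p (with |A| = n) fixed by the rotation of F_p: a fixed relation has either F_p as one
   block (these are the relations on A + 1) or all points of F_p as singletons
   (the relations on A).
   Modulo the annihilator ideal of u, f gives X^p = X + 1 and, with the Frobenius
   map, X^(p^k) = X + k, so a period P = sum a_k p^k puts q - 1 in the ideal,
   where q = prod_k (X + k)^(a_k) has degree s = sum a_k.  The ideal contains no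
   nonzero h of degree < p: h(X + 1) = h^p - (multiple of f) also lies in it, so
   by induction on the degree h(X + 1) = h, hence h is constant, hence 0 since
   u_0 = 1.  So if s <= p, the monic X^(p-s) (q - 1) of degree p equals f, and
   evaluating at 1 gives q(1) = 0, although 1 + k <> 0 in F_p for k < p - 1. *)

Section PolyFacts.
Local Open Scope ring_scope.
Variable R : comNzRingType.
Implicit Types (A B : {poly R}).

Lemma size_subr_lt A B : size A = size B -> lead_coef A = lead_coef B ->
  A != 0 -> (size (A - B)%R < size A)%N.
Proof.
move=> sAB lAB A0; have sA0 : (0 < size A)%N by rewrite size_poly_gt0.
have sABl : (size (A - B)%R <= (size A).-1)%N.
  apply/leq_sizeP => j hj; rewrite coefB.
  have [->|neq] := eqVneq j (size A).-1.
    by rewrite {2}sAB -!lead_coefE lAB subrr.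
  have size_le_j : (size A <= j)%N by rewrite -(prednK sA0) ltn_neqAle eq_sym neq hj.
  by rewrite !nth_default ?subrr // -sAB.
by rewrite (leq_ltn_trans sABl) // ltn_predL.
Qed.

Lemma size_exp_XaddC n (c : R) : size (('X + c%:P) ^+ n) = n.+1.
Proof. by rewrite -[c]opprK polyCN size_exp_XsubC. Qed.

Lemma monic_prod_exp_XaddC m (c : nat -> R) (a : nat -> nat) :
  \prod_(k < m) ('X + (c k)%:P) ^+ a k \is monic.
Proof. by apply: monic_prod => k _; apply/monic_exp/monicXaddC. Qed.

Lemma size_prod_exp_XaddC m (c : nat -> R) (a : nat -> nat) :
  size (\prod_(k < m) ('X + (c k)%:P) ^+ a k) = (\sum_(k < m) a k).+1.
Proof.
elim: m => [|m IHm]; first by rewrite !big_ord0 size_poly1.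
rewrite !big_ord_recr /= size_monicM ?monic_prod_exp_XaddC ?monic_neq0 //.
  by rewrite IHm size_exp_XaddC addSn addnS.
by rewrite monic_exp ?monicXaddC.
Qed.

Lemma comp_polyB_factor g A B : exists k, (g \Po A) - (g \Po B) = k * (A - B).
Proof.
move: g; apply: poly_ind => [|g c [k IHk]].
  by exists 0; rewrite !comp_poly0 subrr mul0r.
exists (k * A + (g \Po B)); rewrite !comp_polyD !comp_polyM !comp_polyX !comp_polyC.
have -> : g \Po A = k * (A - B) + (g \Po B) by rewrite -IHk subrK.
ring.
Qed.

End PolyFacts.

Section ShiftOperator.
Local Open Scope ring_scope.
Variable R : comNzRingType.
Implicit Types (g h : {poly R}) (u v : nat -> R).

(* [h] acts on sequences as [h(E)], where [E] is the shift [u n |-> u n.+1]. *)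
Definition shift_act h u n : R := \sum_(i < size h) h`_i * u (n + i)%N.

Lemma shift_act_widen h u n N : (size h <= N)%N ->
  shift_act h u n = \sum_(i < N) h`_i * u (n + i)%N.
Proof.
move=> hN; rewrite /shift_act (big_ord_widen N (fun i => h`_i * u (n + i)%N) hN).
rewrite big_mkcond; apply: eq_bigr => i _; case: ifPn => //.
by rewrite -leqNgt => hi; rewrite nth_default ?mul0r.
Qed.

Lemma eq_shift_act h u v n : u =1 v -> shift_act h u n = shift_act h v n.
Proof. by move=> uv; apply: eq_bigr => i _; rewrite uv. Qed.

Lemma shift_act0 u n : shift_act 0 u n = 0.
Proof. by rewrite /shift_act size_poly0 big_ord0. Qed.

Lemma shift_actD g h u n : shift_act (g + h) u n = shift_act g u n + shift_act h u n.
Proof.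
pose N := maxn (size g) (size h).
rewrite !(@shift_act_widen _ _ _ N) ?leq_maxl ?leq_maxr ?size_polyD //.
by rewrite -big_split; apply: eq_bigr => i _; rewrite coefD mulrDl.
Qed.

Lemma shift_actN h u n : shift_act (- h) u n = - shift_act h u n.
Proof.
rewrite !(@shift_act_widen _ _ _ (size h)) ?size_polyN //.
by rewrite -sumrN; apply: eq_bigr => i _; rewrite coefN mulNr.
Qed.

Lemma shift_actZ c h u n : shift_act (c *: h) u n = c * shift_act h u n.
Proof.
rewrite !(@shift_act_widen _ _ _ (size h)) ?size_scale_leq //.
by rewrite mulr_sumr; apply: eq_bigr => i _; rewrite coefZ mulrA.
Qed.

Lemma shift_actC c u n : shift_act c%:P u n = c * u n.
Proof.
by rewrite (@shift_act_widen _ _ _ 1) ?size_polyC_leq1 // big_ord1 coefC addn0.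
Qed.

Lemma shift_actMX h u n : shift_act (h * 'X) u n = shift_act h u n.+1.
Proof.
have [->|h0] := eqVneq h 0; first by rewrite mul0r !shift_act0.
rewrite /shift_act size_mulX // big_ord_recl coefMX mul0r add0r.
by apply: eq_bigr => i _; rewrite coefMX /= addnS addSn.
Qed.

Lemma shift_actXn k u n : shift_act 'X^k u n = u (n + k)%N.
Proof.
elim: k n => [|k IHk] n; first by rewrite expr0 -polyC1 shift_actC mul1r addn0.
by rewrite exprSr shift_actMX IHk addSnnS.
Qed.

Lemma shift_actM g h u n : shift_act (g * h) u n = shift_act g (shift_act h u) n.
Proof.
elim/poly_ind: g u n => [|g c IHg] u n; first by rewrite mul0r !shift_act0.
rewrite mulrDl mul_polyC shift_actD shift_actZ shift_actD shift_actC shift_actMX.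
rewrite -mulrA -(commr_polyX h) mulrA shift_actMX IHg.
by congr (_ + _); apply: eq_shift_act => m; rewrite shift_actMX.
Qed.

Definition ann u h : Prop := forall n, shift_act h u n = 0.

Lemma ann0 u : ann u 0.
Proof. by move=> n; rewrite shift_act0. Qed.

Lemma annD u g h : ann u g -> ann u h -> ann u (g + h).
Proof. by move=> ug uh n; rewrite shift_actD ug uh addr0. Qed.

Lemma annB u g h : ann u g -> ann u h -> ann u (g - h).
Proof. by move=> ug uh n; rewrite shift_actD shift_actN ug uh oppr0 addr0. Qed.

Lemma annMl u g h : ann u h -> ann u (g * h).
Proof.
move=> uh n; rewrite shift_actM (@eq_shift_act _ _ (fun=> 0)) //.
by rewrite /shift_act big1 // => i _; rewrite mulr0.
Qed.

Lemma annX u h k : (0 < k)%N -> ann u h -> ann u (h ^+ k).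
Proof. by case: k => // k _ uh; rewrite exprSr; apply: annMl. Qed.

Lemma ann_prodB u (I : Type) (r : seq I) (P : pred I) (G H : I -> {poly R}) :
  (forall i, P i -> ann u (G i - H i)) ->
  ann u (\prod_(i <- r | P i) G i - \prod_(i <- r | P i) H i).
Proof.
move=> uGH; elim/big_rec2: _ => [|i h g Pi ugh]; first by rewrite subrr; apply: ann0.
have -> : G i * g - H i * h = G i * (g - h) + h * (G i - H i) by ring.
by apply: annD; apply: annMl; last exact: uGH.
Qed.

Lemma ann_expB u m g h : ann u (g - h) -> ann u (g ^+ m - h ^+ m).
Proof. by move=> ugh; rewrite -[m]card_ord -!prodr_const; apply: ann_prodB. Qed.

End ShiftOperator.

Section TouchardPolynomial.
Local Open Scope ring_scope.
Variables (p : nat) (p_pr : prime p).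
Local Notation F := 'F_p.
Implicit Types (g h : {poly F}).

Let pchar_polyFp : p \in [pchar {poly F}].
Proof. by rewrite pchar_poly pchar_Fp. Qed.

Let expDp g h : (g + h) ^+ p = g ^+ p + h ^+ p.
Proof. exact: (pFrobenius_autD_comm pchar_polyFp (mulrC g h)). Qed.

Let expBp g h : (g - h) ^+ p = g ^+ p - h ^+ p.
Proof. exact: (pFrobenius_autB_comm pchar_polyFp (mulrC g h)). Qed.

Let expp_Fp (c : F) : c ^+ p = c.
Proof. by rewrite -[RHS]expf_card card_Fp. Qed.

Lemma Frobenius_polyFp g : g ^+ p = g \Po 'X^p.
Proof.
elim/poly_ind: g => [|g c IHg]; first by rewrite comp_poly0 expr0n gtn_eqF ?prime_gt0.
rewrite expDp exprMn IHg -polyC_exp expp_Fp.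
by rewrite comp_polyD comp_polyM comp_polyX comp_polyC.
Qed.

Lemma comp_XaddC1_fixed_const h : (size h <= p)%N -> h \Po ('X + 1) = h ->
  h = (h.[0])%:P.
Proof.
move=> hp hfix; have hnat k : h.[k%:R] = h.[0].
  elim: k => [|k IHk] //; rewrite -IHk -[in RHS]hfix horner_comp.
  by rewrite hornerD hornerX hornerC -mulrSr.
have small : (size (h - (h.[0])%:P)%R <= p)%N.
  rewrite (leq_trans (size_polyD _ _)) // geq_max hp size_polyN.
  by rewrite (leq_trans (size_polyC_leq1 _)) ?prime_gt0.
apply/eqP; rewrite -subr_eq0; apply: contraTT small => nz; rewrite -ltnNge.
have := max_poly_roots nz (rs := enum F); rewrite enum_uniq -cardE card_Fp //.
apply=> //; apply/allP => x _.
by rewrite rootE !hornerE -(natr_Zp x) hnat subrr.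
Qed.

Definition touchard_poly : {poly F} := 'X^p - 'X - 1.

Lemma size_touchard_poly : size touchard_poly = p.+1.
Proof.
rewrite /touchard_poly -addrA -opprD size_polyDl size_polyXn //.
by rewrite size_polyN -polyC1 size_XaddC ltnS prime_gt1.
Qed.

Lemma touchard_poly_monic : touchard_poly \is monic.
Proof.
rewrite monicE /touchard_poly -addrA -opprD lead_coefDl ?lead_coefXn //.
by rewrite size_polyXn size_polyN -polyC1 size_XaddC ltnS prime_gt1.
Qed.

Lemma ann_touchard_poly (u : nat -> F) :
  (forall n, u (n + p)%N = u n + u n.+1) -> ann u touchard_poly.
Proof.
move=> u_rec n; rewrite !shift_actD !shift_actN -(expr1 'X) -(expr0 'X) !shift_actXn.
by rewrite u_rec addn0 addn1 addrK subrr.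
Qed.

Section TouchardSequence.
Variable u : nat -> F.
Hypotheses (u0 : u 0%N = 1) (u_touchard : ann u touchard_poly).

Lemma ann_comp_XaddC1 g : ann u g -> ann u (g \Po ('X + 1)).
Proof.
move=> ug; have [k gXp] := comp_polyB_factor g 'X^p ('X + 1).
have -> : g \Po ('X + 1) = g ^+ p - k * touchard_poly.
  by rewrite Frobenius_polyFp -[touchard_poly]/('X^p - 'X - 1) -addrA -opprD -gXp; ring.
by apply: annB; [apply: annX (prime_gt0 p_pr) ug | apply: annMl].
Qed.

Lemma ann_size_le_eq0 h : ann u h -> (size h <= p)%N -> h = 0.
Proof.
elim: {h}(size h) {-2}h (leqnn (size h)) => [|m IHm] h size_h uh h_le_p.
  by apply/eqP; rewrite -size_poly_eq0 -leqn0.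
have [->|h0] := eqVneq h 0; first by [].
have sX1 : size ('X + 1 : {poly F}) = 2 by rewrite -polyC1 size_XaddC.
have lt_diff : (size (h \Po ('X + 1) - h)%R < size h)%N.
  rewrite -[in X in (_ < X)%N](size_comp_poly2 h sX1) size_subr_lt ?size_comp_poly2 //.
    by rewrite lead_coef_comp ?sX1 // -polyC1 lead_coefXaddC expr1n mulr1.
  by rewrite comp_poly2_eq0.
have hfix : h \Po ('X + 1) = h.
  apply/eqP; rewrite -subr_eq0; apply/eqP; apply: IHm.
  - by rewrite -ltnS (leq_trans lt_diff).
  - by apply: annB => //; apply: ann_comp_XaddC1.
  - by rewrite (leq_trans (ltnW lt_diff)).
have hC := comp_XaddC1_fixed_const h_le_p hfix.
by have := uh 0%N; rewrite hC shift_actC u0 mulr1 => ->.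
Qed.

Lemma ann_Xexpp_XaddC k : ann u ('X^(p ^ k) - ('X + k%:R%:P)).
Proof.
elim: k => [|k IHk]; first by rewrite expn0 expr1 polyC0 addr0 subrr; apply: ann0.
have -> : 'X^(p ^ k.+1) - ('X + k.+1%:R%:P) =
    ('X^(p ^ k) - ('X + k%:R%:P)) ^+ p + touchard_poly.
  rewrite expBp expDp -exprM -polyC_exp expp_Fp.
  by rewrite expnSr /touchard_poly mulrSr polyCD polyC1; ring.
by apply: annD => //; apply: annX (prime_gt0 p_pr) IHk.
Qed.

Lemma ann_period_prod m (a : nat -> nat) :
  (forall n, u (n + \sum_(k < m) a k * p ^ k)%N = u n) ->
  ann u (\prod_(k < m) ('X + k%:R%:P) ^+ a k - 1).
Proof.
move=> u_period; set P := (\sum_(k < m) _)%N in u_period.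
have uXP1 : ann u ('X^P - 1).
  move=> n; rewrite shift_actD shift_actN -(expr0 'X) !shift_actXn.
  by rewrite addn0 u_period subrr.
have uXPprod : ann u ('X^P - \prod_(k < m) ('X + k%:R%:P) ^+ a k).
  have -> : 'X^P = \prod_(k < m) 'X^(p ^ k) ^+ a k :> {poly F}.
    by rewrite /P -prodrXr; apply: eq_bigr => k _; rewrite mulnC exprM.
  by apply: ann_prodB => k _; apply/ann_expB/ann_Xexpp_XaddC.
set q := \prod_(k < m) _ in uXPprod *.
have -> : q - 1 = ('X^P - 1) - ('X^P - q) by ring.
exact: annB.
Qed.

Lemma monic_ann_eq_touchard g :
  g \is monic -> size g = p.+1 -> ann u g -> g = touchard_poly.
Proof.
move=> g_monic g_size ug; apply/eqP; rewrite -subr_eq0; apply/eqP.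
apply: ann_size_le_eq0; first exact: annB.
rewrite -ltnS -g_size size_subr_lt ?size_touchard_poly ?monic_neq0 //.
by rewrite (eqP g_monic) (eqP touchard_poly_monic).
Qed.

Lemma touchard_period_digit_sum (a : nat -> nat) :
  (0 < \sum_(k < p.-1) a k * p ^ k)%N ->
  (forall n, u (n + \sum_(k < p.-1) a k * p ^ k)%N = u n) ->
  (p.+1 <= \sum_(k < p.-1) a k)%N.
Proof.
move=> P_gt0 u_period; set s := (\sum_(k < p.-1) a k)%N.
set q := \prod_(k < p.-1) ('X + k%:R%:P) ^+ a k : {poly F}.
have q_size : size q = s.+1 by rewrite size_prod_exp_XaddC.
have s_gt0 : (0 < s)%N.
  rewrite lt0n; apply: contraTneq P_gt0 => /eqP; rewrite sum_nat_eq0 => /forallP a0.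
  by rewrite lt0n negbK sum_nat_eq0; apply/forallP => k; rewrite (eqP (a0 k)).
have size_1_lt : (size (- 1 : {poly F})%R < size q)%N.
  by rewrite size_polyN size_poly1 q_size ltnS.
have q1_monic : q - 1 \is monic.
  by rewrite monicE lead_coefDl // -monicE monic_prod_exp_XaddC.
rewrite leqNgt; apply/negP => s_le_p.
pose g := 'X^(p - s) * (q - 1).
have : g = touchard_poly.
  apply: monic_ann_eq_touchard.
  - by rewrite monicMl ?monicXn.
  - rewrite size_monicM ?monicXn ?monic_neq0 // size_polyXn size_polyDl //.
    by rewrite q_size addSn addnS subnK.
  - exact/annMl/ann_period_prod.
move/(congr1 (fun r => r.[1])); rewrite /touchard_poly !hornerE !expr1n mul1r.
move/eqP; rewrite subrr subr_eq subrK; apply/negP.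
rewrite horner_prod; apply/prodf_neq0 => k _.
rewrite horner_exp expf_neq0 // hornerD hornerX hornerC -mulrS.
by rewrite -(dvdn_pcharf (pchar_Fp p_pr)) gtnNdvd // -ltn_predRL.
Qed.

End TouchardSequence.

End TouchardPolynomial.

Section EquivalenceRelations.
Implicit Types T U V : finType.

Definition is_equivrel T (R : {set T * T}) : bool :=
  [&& [forall x, (x, x) \in R],
      [forall x, forall y, ((x, y) \in R) ==> ((y, x) \in R)] &
      [forall x, forall y, forall z,
         ((x, y) \in R) ==> ((y, z) \in R) ==> ((x, z) \in R)]].

Definition equivrels T := [set R : {set T * T} | is_equivrel R].

Lemma is_equivrelP T (R : {set T * T}) :
  reflect [/\ forall x, (x, x) \in R,
              forall x y, (x, y) \in R -> (y, x) \in R &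
              forall x y z, (x, y) \in R -> (y, z) \in R -> (x, z) \in R]
          (is_equivrel R).
Proof.
apply: (iffP and3P) => [[/forallP refl /forallP sym /forallP trans]|[refl sym trans]].
  split=> // [x y | x y z]; first exact/implyP/(forallP (sym x)).
  by move/forallP/(_ y)/forallP/(_ z)/implyP: (trans x) => trans_xyz /trans_xyz/implyP.
split; first exact/forallP.
  by apply/forallP => x; apply/forallP => y; apply/implyP/sym.
apply/forallP => x; apply/forallP => y; apply/forallP => z.
by apply/implyP => xy; apply/implyP/trans.
Qed.

Lemma equivrel_congr T (R : {set T * T}) x x' y y' : is_equivrel R ->
  (x, x') \in R -> (y, y') \in R -> ((x, y) \in R) = ((x', y') \in R).
Proof.
case/is_equivrelP=> _ sym trans xx' yy'; apply/idP/idP => xy.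
  exact: trans (trans _ _ _ (sym _ _ xx') xy) yy'.
exact: trans xx' (trans _ _ _ xy (sym _ _ yy')).
Qed.

Definition preimrel T U (f : U -> T) (R : {set T * T}) : {set U * U} :=
  [set xy | (f xy.1, f xy.2) \in R].

Lemma in_preimrel T U (f : U -> T) R x y :
  ((x, y) \in preimrel f R) = ((f x, f y) \in R).
Proof. by rewrite inE. Qed.

Lemma preimrel_equiv T U (f : U -> T) R : is_equivrel R -> is_equivrel (preimrel f R).
Proof.
case/is_equivrelP=> refl sym trans; apply/is_equivrelP.
split=> [x | x y | x y z]; rewrite !in_preimrel; first exact: refl.
  exact: sym.
exact: trans.
Qed.

Lemma preimrel_comp T U V (f : U -> T) (g : V -> U) R :
  preimrel g (preimrel f R) = preimrel (f \o g) R.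
Proof. by apply/setP => -[x y]; rewrite !in_preimrel. Qed.

Lemma eq_preimrel T U (f g : U -> T) R : f =1 g -> preimrel f R = preimrel g R.
Proof. by move=> fg; apply/setP => -[x y]; rewrite !in_preimrel !fg. Qed.

Lemma preimrel_id T (R : {set T * T}) : preimrel id R = R.
Proof. by apply/setP => -[x y]; rewrite in_preimrel. Qed.

Lemma preimrel_can T U (f : U -> T) (g : T -> U) :
  cancel g f -> cancel (preimrel f) (preimrel g).
Proof. by move=> gK R; rewrite preimrel_comp (eq_preimrel _ gK) preimrel_id. Qed.

Lemma iter_preimrel T k (f : T -> T) (R : {set T * T}) :
  iter k (preimrel f) R = preimrel (iter k f) R.
Proof.
elim: k => [|k IHk]; first by rewrite preimrel_id.
by rewrite iterS IHk preimrel_comp; apply: eq_preimrel => x; rewrite iterSr.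
Qed.

Lemma card_in_bij T U (A : {set T}) (B : {set U}) (f : T -> U) (g : U -> T) :
  {in A, forall x, f x \in B} -> {in B, forall y, g y \in A} ->
  {in A, cancel f g} -> {in B, cancel g f} -> #|A| = #|B|.
Proof.
move=> fA gB fK gK; rewrite -(card_in_imset (can_in_inj fK)).
apply: eq_card => y; apply/imsetP/idP => [[x xA ->]|yB]; first exact: fA.
by exists (g y); [apply: gB | rewrite gK].
Qed.

Lemma card_equivrels_bij T U (f : U -> T) (g : T -> U) :
  cancel f g -> cancel g f -> #|equivrels T| = #|equivrels U|.
Proof.
move=> fK gK; apply: (@card_in_bij _ _ _ _ (preimrel f) (preimrel g)).
- by move=> R; rewrite !inE; apply: preimrel_equiv.
- by move=> R; rewrite !inE; apply: preimrel_equiv.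
- by move=> R _; apply: preimrel_can.
- by move=> R _; apply: preimrel_can.
Qed.

Lemma card_partitions_equivrels T :
  #|[set P : {set {set T}} | partition P [set: T]]| = #|equivrels T|.
Proof.
pose rel_of (P : {set {set T}}) : {set T * T} := [set xy | xy.2 \in pblock P xy.1].
pose part_of (R : {set T * T}) :=
  equivalence_partition (fun x y => (x, y) \in R) [set: T].
have equiv_in R : is_equivrel R ->
    {in [set: T] & &, equivalence_rel (fun x y => (x, y) \in R)}.
  case/is_equivrelP => refl sym trans x y z _ _ _; split=> [|xy]; first exact: refl.
  by apply/idP/idP => [/(trans _ _ _ (sym _ _ xy))|]; last exact: trans.
apply: (@card_in_bij _ _ _ _ rel_of part_of).
- move=> P; rewrite !inE => partP; apply/is_equivrelP.
  have Pequiv (x y z : T) :=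
    pblock_equivalence partP (in_setT x) (in_setT y) (in_setT z).
  split=> [x | x y | x y z]; rewrite !inE /=; first exact: (Pequiv x x x).1.
    by move=> xy; rewrite -((Pequiv x y x).2 xy) (Pequiv x x x).1.
  by move=> xy; rewrite ((Pequiv x y z).2 xy).
- by move=> R; rewrite !inE => /equiv_in/equivalence_partitionP.
- move=> P; rewrite inE => partP.
  rewrite /part_of -[RHS](equivalence_partition_pblock partP).
  by apply: eq_imset => x; apply/setP => y; rewrite !inE.
- move=> R; rewrite inE => /equiv_in equivR; apply/setP => -[x y].
  by rewrite inE /= (pblock_equivalence_partition equivR) ?in_setT.
Qed.

Lemma bell_card T : bell #|T| = #|equivrels T|.
Proof.
rewrite /bell card_partitions_equivrels.
exact: card_equivrels_bij (@enum_rankK T) (@enum_valK T).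
Qed.

Lemma bell0 : bell 0 = 1.
Proof.
rewrite -[in bell _](card_ord 0) bell_card -(cards1 (set0 : {set 'I_0 * 'I_0})).
apply: eq_card => R; rewrite !inE.
have -> : R = set0 by apply/setP => -[[]].
by rewrite eqxx; apply/is_equivrelP; split; case.
Qed.

End EquivalenceRelations.

Section TouchardCongruence.
Variables (p : nat) (p_pr : prime p) (A : finType).
Local Notation T := (A + 'F_p)%type.
Local Open Scope ring_scope.

Let eq_inr (i j : 'F_p) : (inr i == inr j :> T) = (i == j).
Proof. by []. Qed.

Definition shiftF (c : 'F_p) (x : T) : T := if x is inr j then inr (j + c) else x.

Lemma shiftFK c : cancel (shiftF (- c)) (shiftF c).
Proof. by case=> //= j; rewrite subrK. Qed.

Lemma iter_shiftF1 k : iter k (shiftF 1) =1 shiftF k%:R.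
Proof.
elim: k => [|k IHk] x /=; first by case: x => //= j; rewrite addr0.
by rewrite IHk; case: x => //= j; rewrite mulrSr addrA.
Qed.

Definition rot_rel (R : {set T * T}) := preimrel (shiftF 1) R.

Lemma rot_rel_inj : injective rot_rel.
Proof. exact: can_inj (preimrel_can (shiftFK 1)). Qed.

Definition rot_perm : {perm {set T * T}} := perm rot_rel_inj.

Lemma rot_perm_order : (rot_perm ^+ p = 1)%g.
Proof.
apply/permP => R; rewrite permX perm1 (eq_iter (permE rot_rel_inj)) iter_preimrel.
rewrite -[RHS]preimrel_id; apply: eq_preimrel => x.
by rewrite iter_shiftF1 pchar_Fp_0 //; case: x => //= j; rewrite addr0.
Qed.

Lemma rot_pgroup : (p.-group <[rot_perm]>)%g.
Proof.
rewrite /pgroup -orderE; apply: pnat_dvd (pnat_id p_pr).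
by rewrite order_dvdn rot_perm_order.
Qed.

Lemma rot_acts_equivrels : [acts <[rot_perm]>, on equivrels T | 'P]%g.
Proof.
rewrite cycle_subG; apply/astabsP => R; rewrite /= apermE permE !inE.
apply/idP/idP => [|]; last exact: preimrel_equiv.
by move/(preimrel_equiv (shiftF (- 1))); rewrite (preimrel_can (shiftFK 1)).
Qed.

Lemma card_equivrels_fixed_mod :
  #|equivrels T| = #|equivrels T :&: 'Fix_'P[rot_perm]%g| %[mod p].
Proof. by rewrite -afix_cycle; apply: pgroup_fix_mod rot_pgroup rot_acts_equivrels. Qed.

Lemma rot_fixedP R : reflect (rot_rel R = R) (R \in 'Fix_'P[rot_perm]%g).
Proof. by apply: (iffP afix1P); rewrite /= apermE permE. Qed.

Lemma rot_fixed_shiftF R c x y : rot_rel R = R ->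
  ((shiftF c x, shiftF c y) \in R) = ((x, y) \in R).
Proof.
move=> fixR; have fixRk k : iter k rot_rel R = R by elim: k => //= k ->.
have := fixRk (val c); rewrite /rot_rel iter_preimrel => {2}<-.
by rewrite in_preimrel !iter_shiftF1 natr_Zp.
Qed.

Definition fused_rels := [set R in equivrels T | [forall j, (inr j, inr 0) \in R]].

Definition split_rels := [set R in equivrels T |
  [forall j, forall y, ((inr j, y) \in R) ==> (y == inr j)]].

Lemma split_rel_inrl R j y : R \in split_rels -> ((inr j, y) \in R) = (y == inr j).
Proof.
rewrite !inE => /andP[/is_equivrelP[refl _ _] /forallP splitR].
by apply/idP/eqP => [/(implyP (forallP (splitR j) y))/eqP|->].
Qed.

Lemma split_rel_inrr R j y : R \in split_rels -> ((y, inr j) \in R) = (y == inr j).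
Proof.
move=> splitR; rewrite -(split_rel_inrl j y splitR).
move: splitR; rewrite !inE => /andP[/is_equivrelP[_ sym _] _].
by apply/idP/idP; apply: sym.
Qed.

Lemma rot_fixed_fused_or_split R : is_equivrel R -> rot_rel R = R ->
  R \in fused_rels :|: split_rels.
Proof.
move=> equivR fixR; have /is_equivrelP[refl sym trans] := equivR.
rewrite !inE equivR orbC -implyNb; apply/implyP.
move=> /forallPn[j /forallPn[y]]; rewrite negb_imply => /andP[jy ne_y].
apply/forallP => t; apply: (sym _ _).
have shift c x z : (x, z) \in R -> (shiftF c x, shiftF c z) \in R.
  by rewrite rot_fixed_shiftF.
case: y jy ne_y => [a|y'] jy ne_y.
  have at_ t' : (inl a, inr t') \in R.
    by have := shift (t' - j) _ _ (sym _ _ jy); rewrite /= subrKC.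
  exact: trans (sym _ _ (at_ 0)) (at_ t).
have d_neq0 : y' - j != 0 by rewrite subr_eq0 -eq_inr.
have step c : (inr c, inr (c + (y' - j))) \in R.
  by have := shift (c - j) _ _ jy; rewrite /= subrKC addrCA.
have mult m : (inr 0, inr (m%:R * (y' - j))) \in R.
  elim: m => [|m IHm]; first by rewrite mul0r refl.
  by apply: trans IHm _; rewrite mulrSr mulrDl mul1r step.
by have := mult (val (t / (y' - j))); rewrite natr_Zp divfK.
Qed.

Lemma fused_or_split_rot_fixed R : R \in fused_rels :|: split_rels -> rot_rel R = R.
Proof.
case/setUP=> [fusedR|splitR]; apply/setP => -[x y]; rewrite in_preimrel.
  move: fusedR; rewrite !inE => /andP[equivR /forallP fusedR].
  have /is_equivrelP[refl sym trans] := equivR.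
  have shift1 z : (shiftF 1 z, z) \in R.
    by case: z => [a|j] //=; apply: trans (fusedR _) (sym _ _ (fusedR j)).
  exact: equivrel_congr.
case: x y => [a|i] [b|j] //=;
  rewrite ?(split_rel_inrl _ _ splitR) ?(split_rel_inrr _ _ splitR) //.
by rewrite !eq_inr (inj_eq (addIr _)).
Qed.

Lemma rot_fixed_equivrels :
  equivrels T :&: 'Fix_'P[rot_perm]%g = fused_rels :|: split_rels.
Proof.
apply/setP => R; rewrite inE; apply/andP/idP => [[equivR /rot_fixedP]|fused_or_split].
  by apply: rot_fixed_fused_or_split; rewrite inE in equivR.
split; last exact/rot_fixedP/fused_or_split_rot_fixed.
by case/setUP: fused_or_split; rewrite inE => /andP[].
Qed.

Lemma fused_splitI : fused_rels :&: split_rels = set0.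
Proof.
apply/setP => R; rewrite inE in_set0; apply/negP => /andP[fusedR splitR].
move: fusedR; rewrite inE => /andP[_ /forallP/(_ 1)].
by rewrite (split_rel_inrl _ _ splitR) eq_inr eq_sym oner_eq0.
Qed.

Definition fuse (x : T) : (A + unit)%type := if x is inl a then inl a else inr tt.
Definition unfuse (x : (A + unit)%type) : T := if x is inl a then inl a else inr 0.

Lemma card_fused_rels : #|fused_rels| = #|equivrels (A + unit)%type|.
Proof.
apply: (@card_in_bij _ _ _ _ (preimrel unfuse) (preimrel fuse)).
- by move=> R; rewrite !inE => /andP[/preimrel_equiv].
- move=> R; rewrite !inE => equivR; rewrite preimrel_equiv //=.
  by apply/forallP => j; rewrite in_preimrel; case/is_equivrelP: equivR.
- move=> R; rewrite !inE => /andP[equivR /forallP fusedR]; rewrite preimrel_comp.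
  have /is_equivrelP[refl sym _] := equivR.
  have fuseK z : (unfuse (fuse z), z) \in R by case: z => [a|j] //=; apply/sym/fusedR.
  by apply/setP => -[x y]; rewrite in_preimrel /=; apply: equivrel_congr.
- move=> R _; rewrite preimrel_comp -[RHS]preimrel_id.
  by apply: eq_preimrel => -[a|[]].
Qed.

Definition split_ext (R : {set A * A}) : {set T * T} :=
  [set xy | match xy with
            | (inl a, inl b) => (a, b) \in R
            | (inr i, inr j) => i == j
            | _ => false end].

Lemma card_split_rels : #|split_rels| = #|equivrels A|.
Proof.
apply: (@card_in_bij _ _ _ _ (preimrel inl) split_ext).
- by move=> R; rewrite !inE => /andP[/preimrel_equiv].
- move=> R; rewrite !inE => /is_equivrelP[refl sym trans]; apply/andP; split.
    apply/is_equivrelP; split=> [[a|i] | [a|i] [b|j] | [a|i] [b|j] [c|k]];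
      rewrite !inE //=; [exact: sym | by rewrite eq_sym | exact: trans | ].
    by move=> /eqP-> /eqP->.
  by apply/forallP => i; apply/forallP => -[b|j]; rewrite inE //= eq_inr eq_sym implybb.
- move=> R splitR; apply/setP => -[[a|i] [b|j]]; rewrite inE /= ?in_preimrel //.
  + by rewrite (split_rel_inrr _ _ splitR).
  + by rewrite (split_rel_inrl _ _ splitR).
  + by rewrite (split_rel_inrl _ _ splitR) eq_inr eq_sym.
- by move=> R _; apply/setP => -[a b]; rewrite in_preimrel inE.
Qed.

Lemma card_equivrels_touchard :
  #|equivrels T| = #|equivrels (A + unit)%type| + #|equivrels A| %[mod p].
Proof.
rewrite card_equivrels_fixed_mod rot_fixed_equivrels.
by rewrite cardsU fused_splitI cards0 subn0 card_fused_rels card_split_rels.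
Qed.

End TouchardCongruence.

Lemma bell_touchard p n : prime p -> bell (n + p) = bell n.+1 + bell n %[mod p].
Proof.
move=> p_pr; have := card_equivrels_touchard p_pr 'I_n.
by rewrite -!bell_card !card_sum card_unit card_ord card_Fp // addn1.
Qed.

Theorem theorem3 (p : nat) (a : nat -> nat) :
  prime p ->
  (forall k, k < p.-1 -> a k < p) ->
  0 < \sum_(k < p.-1) a k * p ^ k ->
  (forall n, bell (n + \sum_(k < p.-1) a k * p ^ k) = bell n %[mod p]) ->
  p.+1 <= \sum_(k < p.-1) a k.
Proof.
move=> p_pr _ P_gt0 bell_period.
pose u n : 'F_p := ((bell n)%:R)%R.
have natFp_mod m k : m = k %[mod p] -> (m%:R : 'F_p)%R = k%:R%R.
  by move=> mk; rewrite -(Fp_nat_mod p_pr) mk Fp_nat_mod.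
apply: (touchard_period_digit_sum p_pr (u := u) _ _ P_gt0).
- by rewrite /u bell0.
- apply: ann_touchard_poly => n; rewrite -natrD.
  by apply: natFp_mod; rewrite bell_touchard // addnC.
- by move=> n; apply: natFp_mod.
Qed.
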